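(* Let $B\in\mathbb{C}^{n\times n}$ be nonzero of rank $r$ with Hartwig–Spindelböck decomposition $B=U\begin{bmatrix}\Sigma K&\Sigma L\\0&0\end{bmatrix}U^*$, let $T\in\mathbb{C}^{r\times r}$ be idempotent, and let $A=U\begin{bmatrix}(\Sigma^{-1}T)^\dagger K&(\Sigma^{-1}T)^\dagger L\\0&0\end{bmatrix}U^*$, so that $A\le^{\diamond}B$. Then $A^\dagger\le^{\diamond}B^\dagger$ if and only if $T(T^*-I_r)\Sigma^{-2}T=0$.
   Context: $M^*$ is the conjugate transpose, $M^\dagger$ the Moore–Penrose inverse, $\mathcal{R}(M)$ the column space. Hartwig–Spindelböck decomposition: every $B\in\mathbb{C}^{n\times n}$ of rank $r>0$ can be written $B=U\begin{bmatrix}\Sigma K&\Sigma L\\0&0\end{bmatrix}U^*$ with $U$ unitary, $\Sigma\in\mathbb{C}^{r\times r}$ the positive diagonal matrix of nonzero singular values of $B$, $K\in\mathbb{C}^{r\times r}$, $L\in\mathbb{C}^{r\times(n-r)}$ with $KK^*+LL^*=I_r$. Diamond order: $X\le^{\diamond}Y$ iff $\mathcal{R}(X)\subseteq\mathcal{R}(Y)$, $\mathcal{R}(X^* )\subseteq\mathcal{R}(Y^* )$, and $XY^*X=XX^*X$. *)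

From Stdlib Require Import ClassicalEpsilon.
From mathcomp Require Import all_boot all_order all_algebra.
Set Implicit Arguments. Unset Strict Implicit. Unset Printing Implicit Defensive.
Import Order.TTheory GRing.Theory Num.Theory.
Local Open Scope ring_scope.

Definition ctmx (C : numClosedFieldType) (m n : nat) (M : 'M[C]_(m, n)) : 'M[C]_(n, m) :=
  map_mx Num.conj M^T.

Definition penrose (C : numClosedFieldType) (m n : nat)
  (M : 'M[C]_(m, n)) (X : 'M[C]_(n, m)) : Prop :=
  [/\ M *m X *m M = M, X *m M *m X = X,
      ctmx (M *m X) = M *m X & ctmx (X *m M) = X *m M].

(* Moore-Penrose inverse M^dagger: the (unique, always existing) solution of
   the Penrose equations, chosen by Hilbert's epsilon. *)
Definition mpinv (C : numClosedFieldType) (m n : nat) (M : 'M[C]_(m, n)) : 'M[C]_(n, m) :=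
  epsilon (inhabits 0) (penrose M).

(* Column space inclusion R(X) ⊆ R(Y): column space of X = row space of X^T. *)
Definition colsub (C : numClosedFieldType) (m n p : nat)
  (X : 'M[C]_(m, n)) (Y : 'M[C]_(m, p)) : bool := (X^T <= Y^T)%MS.

Definition diamond_le (C : numClosedFieldType) (m n : nat) (X Y : 'M[C]_(m, n)) : Prop :=
  [/\ colsub X Y, colsub (ctmx X) (ctmx Y) & X *m ctmx Y *m X = X *m ctmx X *m X].

(* Write B = W Sigma V and A = W (Sigma^-1 T)^dagger V, where W = U [I; 0] satisfies
   W^* W = I and V = [K L] U^* satisfies V V^* = I.  Both the Moore-Penrose inverse
   and the diamond order are transported by such a conjugation, so the claim reduces
   to the r x r statement  Sigma^-1 T <=^diamond Sigma^-1.  As Sigma^-1 is invertible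
   the two range conditions hold automatically, and since it is hermitian the third
   condition, after cancelling Sigma^-1 on the left, is exactly
   T Sigma^-2 T = T T^* Sigma^-2 T. *)

From Pilot Require Import Defs.
From Stdlib Require Import ClassicalEpsilon.
From mathcomp Require Import all_boot all_order all_algebra.
Import Order.TTheory GRing.Theory Num.Theory.
Local Open Scope ring_scope.
Set Implicit Arguments. Unset Strict Implicit. Unset Printing Implicit Defensive.

Section ConjugateTranspose.
Context {C : numClosedFieldType}.

Lemma ctmxM m n p (A : 'M[C]_(m, n)) (B : 'M[C]_(n, p)) :
  ctmx (A *m B) = ctmx B *m ctmx A.
Proof. by rewrite /ctmx trmx_mul map_mxM. Qed.

Lemma ctmxK m n (A : 'M[C]_(m, n)) : ctmx (ctmx A) = A.
Proof. by apply/matrixP=> i j; rewrite /ctmx !mxE conjCK. Qed.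

Lemma ctmx0 m n : ctmx (0 : 'M[C]_(m, n)) = 0.
Proof. by apply/matrixP=> i j; rewrite /ctmx !mxE rmorph0. Qed.

Lemma ctmx1 n : ctmx (1%:M : 'M[C]_n) = 1%:M.
Proof.
by apply/matrixP=> i j; rewrite /ctmx !mxE eq_sym; case: eqP; rewrite ?rmorph1 ?rmorph0.
Qed.

Lemma ctmxV n (A : 'M[C]_n) : ctmx (invmx A) = invmx (ctmx A).
Proof. by rewrite /ctmx trmx_inv map_invmx. Qed.

Lemma ctmx_col m1 m2 n (A : 'M[C]_(m1, n)) (B : 'M[C]_(m2, n)) :
  ctmx (col_mx A B) = row_mx (ctmx A) (ctmx B).
Proof. by rewrite /ctmx tr_col_mx map_row_mx. Qed.

Lemma ctmx_row m n1 n2 (A : 'M[C]_(m, n1)) (B : 'M[C]_(m, n2)) :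
  ctmx (row_mx A B) = col_mx (ctmx A) (ctmx B).
Proof. by rewrite /ctmx tr_row_mx map_col_mx. Qed.

Lemma ctmx_diag_real n (d : 'rV[C]_n) :
  (forall i, d 0 i \is Num.real) -> ctmx (diag_mx d) = diag_mx d.
Proof.
move=> d_real; rewrite /ctmx tr_diag_mx map_diag_mx; congr diag_mx.
by apply/matrixP=> i j; rewrite mxE (ord1 i); exact: conj_Creal.
Qed.

Lemma mxrank_ctmx m n (A : 'M[C]_(m, n)) : \rank (ctmx A) = \rank A.
Proof. by rewrite /ctmx mxrank_map mxrank_tr. Qed.

Lemma mulmx_ctmx_eq0 m n (A : 'M[C]_(m, n)) : A *m ctmx A = 0 -> A = 0.
Proof.
move=> AA0; apply/matrixP=> i j; rewrite mxE.
have := congr1 (fun M : 'M[C]_(m, m) => M i i) AA0; rewrite !mxE => /eqP.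
rewrite psumr_eq0; last by move=> k _; rewrite /ctmx !mxE mul_conjC_ge0.
move/allP/(_ j (mem_index_enum _))/implyP/(_ isT).
by rewrite /ctmx !mxE mul_conjC_eq0 => /eqP.
Qed.

Lemma row_free_gram_unit k m (H : 'M[C]_(k, m)) :
  row_free H -> H *m ctmx H \in unitmx.
Proof.
move=> freeH; rewrite -row_free_unit -kermx_eq0.
set X := kermx _.
have XHH0 : X *m (H *m ctmx H) = 0 by exact: mulmx_ker.
have : (X *m H) *m ctmx (X *m H) = 0.
  by rewrite ctmxM mulmxA -(mulmxA X) XHH0 mul0mx.
by move/mulmx_ctmx_eq0/eqP; rewrite mulmx_free_eq0.
Qed.

End ConjugateTranspose.

Section MoorePenrose.
Context {C : numClosedFieldType}.

Lemma penrose_full_rank_factor m n k (F : 'M[C]_(m, k)) (G : 'M[C]_(k, n)) :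
  G *m ctmx G \in unitmx -> ctmx F *m F \in unitmx ->
  penrose (F *m G) (ctmx G *m invmx (G *m ctmx G) *m invmx (ctmx F *m F) *m ctmx F).
Proof.
move=> uG uF.
have MX : F *m G *m (ctmx G *m invmx (G *m ctmx G) *m invmx (ctmx F *m F) *m ctmx F)
   = F *m invmx (ctmx F *m F) *m ctmx F.
  by rewrite -!mulmxA (mulmxA G) mulKVmx.
have XM : (ctmx G *m invmx (G *m ctmx G) *m invmx (ctmx F *m F) *m ctmx F) *m (F *m G)
   = ctmx G *m invmx (G *m ctmx G) *m G.
  by rewrite !mulmxA -(mulmxA (_ *m invmx (ctmx F *m F)) (ctmx F) F) mulmxKV.
split.
- by rewrite MX mulmxA -(mulmxA (F *m invmx (ctmx F *m F))) mulmxKV.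
- by rewrite XM !mulmxA -(mulmxA (ctmx G *m invmx (G *m ctmx G)) G (ctmx G)) mulmxKV.
- by rewrite MX !ctmxM ctmxK ctmxV ctmxM ctmxK mulmxA.
- by rewrite XM !ctmxM ctmxK ctmxV ctmxM ctmxK mulmxA.
Qed.

Lemma penrose_exists m n (M : 'M[C]_(m, n)) : exists X, penrose M X.
Proof.
have uG : row_base M *m ctmx (row_base M) \in unitmx.
  exact/row_free_gram_unit/row_base_free.
have uF : ctmx (col_base M) *m col_base M \in unitmx.
  rewrite -{2}(ctmxK (col_base M)); apply: row_free_gram_unit.
  by rewrite /row_free mxrank_ctmx; apply: col_base_full.
by have := penrose_full_rank_factor uG uF; rewrite mulmx_base => pen; eexists; exact: pen.
Qed.

Lemma penrose_unique m n (M : 'M[C]_(m, n)) X Y :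
  penrose M X -> penrose M Y -> X = Y.
Proof.
case=> MXM XMX MXh XMh [MYM YMY MYh YMh].
have eX : X = X *m ctmx X *m ctmx M by rewrite -mulmxA -ctmxM MXh mulmxA XMX.
have eMY : ctmx M = ctmx M *m (ctmx Y *m ctmx M) by rewrite -!ctmxM MYM.
have XMY_X : X = X *m M *m Y.
  have -> : X *m M *m Y = X *m ctmx (M *m X) *m ctmx (M *m Y).
    by rewrite MXh MYh !mulmxA XMX.
  by rewrite !ctmxM -!mulmxA -eMY mulmxA -eX.
have eY : Y = ctmx M *m ctmx Y *m Y by rewrite -ctmxM YMh YMY.
have eMX : ctmx M = ctmx M *m ctmx X *m ctmx M by rewrite -!ctmxM mulmxA MXM.
have XMY_Y : Y = X *m M *m Y.
  have -> : X *m M *m Y = ctmx (X *m M) *m ctmx (Y *m M) *m Y.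
    by rewrite XMh YMh -(mulmxA (X *m M)) YMY.
  by rewrite !ctmxM !mulmxA -eMX -eY.
by rewrite XMY_X -XMY_Y.
Qed.

Lemma mpinvP m n (M : 'M[C]_(m, n)) : penrose M (mpinv M).
Proof. exact: epsilon_spec (penrose_exists M). Qed.

Lemma mpinvE m n (M : 'M[C]_(m, n)) X : penrose M X -> mpinv M = X.
Proof. exact: (penrose_unique (mpinvP M)). Qed.

Lemma penrose_sym m n (M : 'M[C]_(m, n)) X : penrose M X -> penrose X M.
Proof. by case; split. Qed.

Lemma mpinvK m n (M : 'M[C]_(m, n)) : mpinv (mpinv M) = M.
Proof. exact/mpinvE/penrose_sym/mpinvP. Qed.

Lemma mpinv_unit n (M : 'M[C]_n) : M \in unitmx -> mpinv M = invmx M.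
Proof.
move=> uM; apply: mpinvE.
by split; rewrite ?mulmxV ?mulVmx ?mul1mx ?ctmx1.
Qed.

Lemma penrose_conj p q k (W : 'M[C]_(p, k)) (V : 'M[C]_(k, q)) (Q R : 'M[C]_k) :
  ctmx W *m W = 1%:M -> V *m ctmx V = 1%:M -> penrose Q R ->
  penrose (W *m Q *m V) (ctmx V *m R *m ctmx W).
Proof.
move=> WW VV [QRQ RQR QRh RQh].
have MX : W *m Q *m V *m (ctmx V *m R *m ctmx W) = W *m (Q *m R) *m ctmx W.
  by rewrite -!mulmxA (mulmxA V) VV mul1mx !mulmxA.
have XM : ctmx V *m R *m ctmx W *m (W *m Q *m V) = ctmx V *m (R *m Q) *m V.
  by rewrite -!mulmxA (mulmxA (ctmx W)) WW mul1mx !mulmxA.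
split.
- by rewrite -[in RHS]QRQ -!mulmxA (mulmxA V) VV mul1mx (mulmxA (ctmx W)) WW mul1mx.
- by rewrite -[in RHS]RQR -!mulmxA (mulmxA (ctmx W)) WW mul1mx (mulmxA V) VV mul1mx.
- by rewrite MX ctmxM ctmxK ctmxM QRh mulmxA.
- by rewrite XM ctmxM ctmxM RQh ctmxK mulmxA.
Qed.

Lemma mpinv_conj p q k (W : 'M[C]_(p, k)) (V : 'M[C]_(k, q)) (Q : 'M[C]_k) :
  ctmx W *m W = 1%:M -> V *m ctmx V = 1%:M ->
  mpinv (W *m Q *m V) = ctmx V *m mpinv Q *m ctmx W.
Proof. by move=> WW VV; apply/mpinvE/penrose_conj/mpinvP. Qed.

End MoorePenrose.

Section DiamondOrder.
Context {C : numClosedFieldType}.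

Lemma colsub_mul2r m n1 n2 k1 k2 (X : 'M[C]_(m, n1)) (Y : 'M[C]_(m, n2))
    (Q1 : 'M[C]_(n1, k1)) (Q1' : 'M[C]_(k1, n1))
    (Q2 : 'M[C]_(n2, k2)) (Q2' : 'M[C]_(k2, n2)) :
  Q1 *m Q1' = 1%:M -> Q2 *m Q2' = 1%:M ->
  Defs.colsub (X *m Q1) (Y *m Q2) = Defs.colsub X Y.
Proof.
have fullT n k (Q : 'M[C]_(n, k)) Q' : Q *m Q' = 1%:M -> row_full Q^T.
  move=> QQ'; rewrite /row_full mxrank_tr eqn_leq rank_leq_row /=.
  by rewrite -[X in (X <= _)%N](mxrank1 C n) -QQ' mxrankM_maxl.
move=> /fullT fQ1 /fullT fQ2; rewrite /Defs.colsub !trmx_mul.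
by rewrite (eqmxMfull _ fQ1) (eqmxMfull _ fQ2).
Qed.

Lemma colsub_mul2l m m' n1 n2 (P : 'M[C]_(m', m)) (P' : 'M[C]_(m, m'))
    (X : 'M[C]_(m, n1)) (Y : 'M[C]_(m, n2)) :
  P' *m P = 1%:M -> Defs.colsub (P *m X) (P *m Y) = Defs.colsub X Y.
Proof.
move=> P'P; rewrite /Defs.colsub !trmx_mul; apply/idP/idP => [|XY]; last exact: submxMr.
by move/(submxMr P'^T); rewrite -!mulmxA -trmx_mul P'P trmx1 !mulmx1.
Qed.

Lemma colsub_unit n m (X : 'M[C]_(n, m)) (Y : 'M[C]_n) : Y \in unitmx -> Defs.colsub X Y.
Proof. by move=> uY; rewrite /Defs.colsub submx_full // row_full_unit unitmx_tr. Qed.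

Lemma diamond_le_conj p q k (W : 'M[C]_(p, k)) (V : 'M[C]_(k, q)) (X Y : 'M[C]_k) :
  ctmx W *m W = 1%:M -> V *m ctmx V = 1%:M ->
  diamond_le (ctmx V *m X *m ctmx W) (ctmx V *m Y *m ctmx W) <-> diamond_le X Y.
Proof.
move=> WW VV.
have conj_inj Z1 Z2 : ctmx V *m Z1 *m ctmx W = ctmx V *m Z2 *m ctmx W -> Z1 = Z2.
  move=> /(congr1 (fun M => V *m M *m W)).
  by rewrite /= !mulmxA VV !mul1mx -!mulmxA WW !mulmx1.
have triple Z1 Z2 : ctmx V *m Z1 *m ctmx W *m ctmx (ctmx V *m Z2 *m ctmx W)
                    *m (ctmx V *m Z1 *m ctmx W)
                  = ctmx V *m (Z1 *m ctmx Z2 *m Z1) *m ctmx W.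
  by rewrite !ctmxM !ctmxK -!mulmxA (mulmxA (ctmx W)) WW mul1mx (mulmxA V) VV mul1mx.
have range : Defs.colsub (ctmx V *m X *m ctmx W) (ctmx V *m Y *m ctmx W)
              = Defs.colsub X Y.
  by rewrite (colsub_mul2r _ _ WW WW) (colsub_mul2l _ _ VV).
have corange : Defs.colsub (ctmx (ctmx V *m X *m ctmx W)) (ctmx (ctmx V *m Y *m ctmx W))
                = Defs.colsub (ctmx X) (ctmx Y).
  by rewrite !ctmxM !ctmxK (colsub_mul2l _ _ WW) (colsub_mul2r _ _ VV VV).
rewrite /diamond_le range corange !triple.
by split=> [[-> -> /conj_inj]|[-> -> ->]].
Qed.

Lemma diamond_le_hermitian_unit n (S T : 'M[C]_n) :
  S \in unitmx -> ctmx S = S ->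
  diamond_le (S *m T) S <-> T *m (ctmx T - 1%:M) *m (S *m S) *m T = 0.
Proof.
move=> uS hermS.
have uSh : ctmx S \in unitmx by rewrite hermS.
have cancelS Z1 Z2 : S *m Z1 = S *m Z2 -> Z1 = Z2.
  by move/(congr1 (mulmx (invmx S))); rewrite !mulKmx.
rewrite /diamond_le !colsub_unit // ctmxM hermS mulmxBr mulmx1 !mulmxBl.
split=> [[_ _]|/subr0_eq TTST].
- by rewrite -!mulmxA => /cancelS ->; rewrite !mulmxA subrr.
- by split=> //; rewrite -!mulmxA; congr (S *m _); move: TTST; rewrite !mulmxA => ->.
Qed.

End DiamondOrder.

Lemma block_mx_col_row (C : numClosedFieldType) r s (Q K : 'M[C]_r) (L : 'M[C]_(r, s)) :
  block_mx (Q *m K) (Q *m L) 0 0 = col_mx 1%:M (0 : 'M_(s, r)) *m Q *m row_mx K L.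
Proof.
by rewrite mul_col_mx mul1mx mul0mx mul_col_mx mul_mx_row mul0mx block_mxEv row_mx0.
Qed.

Theorem theorem5p5 (C : numClosedFieldType) (r s : nat)
  (B U : 'M[C]_(r + s)) (d : 'rV[C]_r) (K : 'M[C]_r) (L : 'M[C]_(r, s))
  (T : 'M[C]_r) :
  (0 < r)%N ->
  \rank B = r ->
  U *m ctmx U = 1%:M ->
  (forall i, 0 < d 0 i) ->
  K *m ctmx K + L *m ctmx L = 1%:M ->
  B = U *m block_mx (diag_mx d *m K) (diag_mx d *m L) 0 0 *m ctmx U ->
  T *m T = T ->
  let Sigma := diag_mx d in
  let P := mpinv (invmx Sigma *m T) in
  let A := U *m block_mx (P *m K) (P *m L) 0 0 *m ctmx U in
  diamond_le (mpinv A) (mpinv B) <->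
  T *m (ctmx T - 1%:M) *m (invmx Sigma *m invmx Sigma) *m T = 0.
Proof.
move=> _ _ UU d_pos KKLL -> _ Sigma P A.
have UU' : ctmx U *m U = 1%:M by apply: mulmx1C.
set W := U *m col_mx 1%:M 0; set V := row_mx K L *m ctmx U.
have WW : ctmx W *m W = 1%:M.
  rewrite ctmxM -mulmxA (mulmxA (ctmx U)) UU' mul1mx.
  by rewrite ctmx_col ctmx1 ctmx0 mul_row_col mul1mx mul0mx addr0.
have VV : V *m ctmx V = 1%:M.
  by rewrite ctmxM ctmxK -mulmxA (mulmxA (ctmx U)) UU' mul1mx ctmx_row mul_row_col.
have uSigma : Sigma \in unitmx.
  by rewrite unitmxE det_diag unitfE; apply/prodf_neq0 => i _; exact: lt0r_neq0.
have hermS : ctmx (invmx Sigma) = invmx Sigma.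
  by rewrite ctmxV ctmx_diag_real // => i; exact: gtr0_real.
have eA : A = W *m P *m V by rewrite /A /W /V block_mx_col_row !mulmxA.
have eB : U *m block_mx (Sigma *m K) (Sigma *m L) 0 0 *m ctmx U = W *m Sigma *m V.
  by rewrite /W /V block_mx_col_row !mulmxA.
rewrite eA -/Sigma eB !mpinv_conj // /P mpinvK mpinv_unit // diamond_le_conj //.
by apply: diamond_le_hermitian_unit; rewrite ?unitmx_inv.
Qed.
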